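(* Let $\mathcal D_{red}$ be a reduced datum of finite Cartan type and $l=(l_i)$ a family of nonzero scalars, and let $E_i=y_i$, $F_i=x_iL_i^{-1}$ in $U(\mathcal D_{red},l)$. For each connected component $J$ of the Dynkin diagram of $(a_{ij})$ choose $d_i\in\{1,2,3\}$ ($i\in J$) and $q_J\in k$ with $q_{ii}=q_J^{2d_i}$ and $d_ia_{ij}=d_ja_{ji}$ for $i,j\in J$, and set $p_{ij}=q_{ij}q_J^{-d_ia_{ij}}$ if $i,j\in J$, $p_{ij}=q_{ij}$ if $i,j$ are in different components. Then the defining relations of $U(\mathcal D_{red},l)$ are equivalent, in $U(\mathcal D_{red},l)$, to: for all $i\ne j$ with $i\in J$, $$\sum_{s=0}^{1-a_{ij}}(-p_{ij})^s\begin{bmatrix}1-a_{ij}\\ s\end{bmatrix}_{q_J^{d_i}}E_i^{1-a_{ij}-s}E_jE_i^s=0,\qquad \sum_{s=0}^{1-a_{ij}}(-p_{ij}^{-1})^s\begin{bmatrix}1-a_{ij}\\ s\end{bmatrix}_{q_J^{d_i}}F_i^{1-a_{ij}-s}F_jF_i^s=0,$$ and for all $i,j$: $E_iF_j-F_jE_i=\delta_{ij}q_{ii}^{-1}l_i(K_i-L_i^{-1})$. Moreover, $gE_ig^{-1}=\chi_i(g)E_i$, $gF_ig^{-1}=\chi_i^{-1}(g)F_i$ for $g\in\Gamma$, and $\Delta(E_i)=K_i\otimes E_i+E_i\otimes1$, $\Delta(F_i)=1\otimes F_i+F_i\otimes L_i^{-1}$.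
   Context: $k$ is an algebraically closed field of characteristic zero; $\widehat\Gamma$ is the character group of the abelian group $\Gamma$. A reduced datum of finite Cartan type $\mathcal D_{red}=\mathcal D_{red}(\Gamma,(L_i)_{1\le i\le n},(K_i)_{1\le i\le n},(\chi_i)_{1\le i\le n},(a_{ij}))$ consists of $n\ge1$, $L_i,K_i\in\Gamma$, $\chi_i\in\widehat\Gamma$, a Cartan matrix $(a_{ij})$ of finite type with $\chi_i(K_j)\chi_j(K_i)=\chi_i(K_i)^{a_{ij}}$, $\chi_i(L_j)=\chi_j(K_i)$, $K_iL_i\ne1$, $\chi_i(K_i)\ne1$. $q_{ij}=\chi_j(K_i)$. $U(\mathcal D_{red},l)$ is the quotient Hopf algebra of the smash product $k\langle x_1,\dots,x_n,y_1,\dots,y_n\rangle\#k[\Gamma]$, where $gx_ig^{-1}=\chi_i^{-1}(g)x_i$, $gy_ig^{-1}=\chi_i(g)y_i$, $\Delta(x_i)=L_i\otimes x_i+x_i\otimes1$, $\Delta(y_i)=K_i\otimes y_i+y_i\otimes1$, $\Delta(g)=g\otimes g$, by the ideal generated by $\operatorname{ad}_c(x_i)^{1-a_{ij}}(x_j)$, $\operatorname{ad}_c(y_i)^{1-a_{ij}}(y_j)$ ($i\ne j$) and $x_iy_j-\chi_j(L_i)y_jx_i-\delta_{ij}l_i(1-K_iL_i)$, with $\operatorname{ad}_c(x_i)(w)=x_iw-(L_iwL_i^{-1})x_i$, $\operatorname{ad}_c(y_i)(w)=y_iw-(K_iwK_i^{-1})y_i$. Gaussian binomials: with $[n]=\frac{v^n-v^{-n}}{v-v^{-1}}$,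 $[n]^!=[1]\cdots[n]$, $\begin{bmatrix}n\\ i\end{bmatrix}=\frac{[n]^!}{[i]^![n-i]^!}$, and $\begin{bmatrix}n\\ i\end{bmatrix}_q$ its specialization $v\mapsto q$. *)

From HB Require Import structures.
From mathcomp Require Import all_boot all_order all_algebra.
Set Implicit Arguments. Unset Strict Implicit. Unset Printing Implicit Defensive.
Import Order.TTheory GRing.Theory Num.Theory.
Local Open Scope ring_scope.

(* The abelian group Gamma is written additively (a zmodType): the group
   product g h is g + h, the unit is 0, the inverse g^-1 is -g. *)

Definition is_character (k : fieldType) (G : zmodType) (chi : G -> k) : Prop :=
  (forall g h, chi (g + h) = chi g * chi h) /\ (forall g, chi g != 0).

Definition finite_cartan (n : nat) (A : 'M[int]_n) : Prop :=
  (forall i, A i i = 2) /\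
  (forall i j, i != j -> A i j <= 0) /\
  (forall i j, A i j = 0 -> A j i = 0) /\
  exists d : 'I_n -> nat,
    (forall i, (0 < d i)%N) /\
    (forall i j, (d i)%:Z * A i j = (d j)%:Z * A j i) /\
    (forall v : 'I_n -> rat, (exists i, v i != 0) ->
       0 < \sum_i \sum_j v i * ((d i)%:Z * A i j)%:~R * v j).

Definition reduced_datum (k : fieldType) (G : zmodType) (n : nat)
    (L K : 'I_n -> G) (chi : 'I_n -> G -> k) (A : 'M[int]_n) : Prop :=
  (0 < n)%N /\ finite_cartan A /\
  (forall i, is_character (chi i)) /\
  (forall i j, chi i (K j) * chi j (K i) = chi i (K i) ^ (A i j)) /\
  (forall i j, chi i (L j) = chi j (K i)) /\
  (forall i, K i + L i != 0) /\
  (forall i, chi i (K i) != 1).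

Definition qq (k : fieldType) (G : zmodType) (n : nat)
    (K : 'I_n -> G) (chi : 'I_n -> G -> k) (i j : 'I_n) : k := chi j (K i).

Definition dynkin_conn (n : nat) (A : 'M[int]_n) : rel 'I_n :=
  connect (fun i j => A i j != 0).

(* p_ij as in the statement; qJ i is the scalar q_J of the component J of i *)
Definition pp (k : fieldType) (G : zmodType) (n : nat)
    (K : 'I_n -> G) (chi : 'I_n -> G -> k) (A : 'M[int]_n)
    (d : 'I_n -> nat) (qJ : 'I_n -> k) (i j : 'I_n) : k :=
  if dynkin_conn A i j then qq K chi i j * qJ i ^ (- ((d i)%:Z * A i j))
  else qq K chi i j.

(* Gaussian binomial [m choose s] (a Laurent polynomial in v, given by the
   q-Pascal rule [m;s] = v^{-s}[m-1;s] + v^{m-s}[m-1;s-1]), specialized at v. *)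
Fixpoint gbinom (R : unitRingType) (v : R) (m s : nat) : R :=
  match m, s with
  | _, 0 => 1
  | 0, _.+1 => 0
  | m'.+1, s'.+1 => v ^- s'.+1 * gbinom v m' s'.+1 + v ^+ (m' - s') * gbinom v m' s'
  end.

(* The data (x, y, rho) in an algebra B over k, rho : Gamma -> B^x a group
   homomorphism, satisfying the smash product relations of
   k<x_1..x_n,y_1..y_n> # k[Gamma]; i.e. an algebra map from the smash
   product to B. *)
Definition smash_rep (k : fieldType) (G : zmodType) (B : algType k) (n : nat)
    (chi : 'I_n -> G -> k) (x y : 'I_n -> B) (rho : G -> B) : Prop :=
  rho 0 = 1 /\
  (forall g h, rho (g + h) = rho g * rho h) /\
  (forall g i, rho g * x i * rho (- g) = (chi i g)^-1 *: x i) /\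
  (forall g i, rho g * y i * rho (- g) = chi i g *: y i).

Definition adc (B : pzRingType) (g ginv a w : B) : B := a * w - (g * w * ginv) * a.

(* The defining relations of U(D_red, l) (beyond those of the smash product). *)
Definition orig_rels (k : fieldType) (G : zmodType) (B : algType k) (n : nat)
    (L K : 'I_n -> G) (chi : 'I_n -> G -> k) (A : 'M[int]_n) (l : 'I_n -> k)
    (x y : 'I_n -> B) (rho : G -> B) : Prop :=
  (forall i j, i != j ->
     iter `|1 - A i j|%N (adc (rho (L i)) (rho (- L i)) (x i)) (x j) = 0) /\
  (forall i j, i != j ->
     iter `|1 - A i j|%N (adc (rho (K i)) (rho (- K i)) (y i)) (y j) = 0) /\
  (forall i j, x i * y j - chi j (L i) *: (y j * x i)
                 - ((i == j)%:R * l i) *: (1 - rho (K i + L i)) = 0).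

Definition new_rels (k : fieldType) (G : zmodType) (B : algType k) (n : nat)
    (L K : 'I_n -> G) (chi : 'I_n -> G -> k) (A : 'M[int]_n) (l : 'I_n -> k)
    (d : 'I_n -> nat) (qJ : 'I_n -> k) (E F : 'I_n -> B) (rho : G -> B) : Prop :=
  (forall i j, i != j ->
     \sum_(s < `|1 - A i j|%N.+1)
        ((- pp K chi A d qJ i j) ^+ s * gbinom (qJ i ^+ d i) `|1 - A i j|%N s)
          *: (E i ^+ (`|1 - A i j|%N - s) * E j * E i ^+ s) = 0) /\
  (forall i j, i != j ->
     \sum_(s < `|1 - A i j|%N.+1)
        ((- (pp K chi A d qJ i j)^-1) ^+ s * gbinom (qJ i ^+ d i) `|1 - A i j|%N s)
          *: (F i ^+ (`|1 - A i j|%N - s) * F j * F i ^+ s) = 0) /\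
  (forall i j, E i * F j - F j * E i
     = ((i == j)%:R * (qq K chi i i)^-1 * l i) *: (rho (K i) - rho (- L i))).

(* The braided adjoint ad_c(a)^m(w) of eigenvectors a, w of conjugation by g, with
   eigenvalues al and be, equals sum_s c_s a^(m-s) w a^s, where sum_s c_s X^s is
   prod_(t<m) (1 - al^t be X).  For al = Q^2 the q-binomial theorem gives
   c_s = (-be Q^(m-1))^s [m s]_Q, which for a = y_i, w = y_j, g = K_i and Q = q_J^d_i
   is the Serre relation for the E's.  Moving all group elements of ad_c(x_i)^m(x_j)
   to the right turns it into a nonzero multiple of ad_c(F_i)^m(F_j) times a group
   element, where the adjoint of F_i is taken with respect to K_i; as F_i has
   eigenvalue q_ii^-1 there, this replaces Q by Q^-1 and p_ij by p_ij^-1.  Finally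
   x_j y_i - q_ij y_i x_j - delta_ij l_j (1 - K_j L_j), multiplied by the unit
   -q_ij^-1 L_j^-1 on the right, becomes the commutator relation for E_i and F_j. *)

From HB Require Import structures.
From mathcomp Require Import all_boot all_order all_algebra.
From mathcomp Require Import ring zify.
Set Implicit Arguments. Unset Strict Implicit. Unset Printing Implicit Defensive.
Import Order.TTheory GRing.Theory Num.Theory.
Local Open Scope ring_scope.

Section AdcPoly.
Variable k : fieldType.

Definition adc_poly (c : nat -> k) (m : nat) : {poly k} :=
  \prod_(t < m) (1 - c t *: 'X).

Lemma adc_polyS c m : adc_poly c m.+1 = adc_poly c m - c m *: (adc_poly c m * 'X).
Proof. by rewrite /adc_poly big_ord_recr /= mulrBr mulr1 scalerAr. Qed.

Lemma coef_adc_poly0 c m : (adc_poly c m)`_0 = 1.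
Proof.
elim: m => [|m IH]; first by rewrite /adc_poly big_ord0 coef1.
by rewrite adc_polyS coefB coefZ coefMX IH mulr0 subr0.
Qed.

Lemma coef_adc_polyS c m s :
  (adc_poly c m.+1)`_s.+1 = (adc_poly c m)`_s.+1 - c m * (adc_poly c m)`_s.
Proof. by rewrite adc_polyS coefB coefZ coefMX. Qed.

Lemma coef_adc_poly_gt c m s : (m < s)%N -> (adc_poly c m)`_s = 0.
Proof.
elim: m s => [|m IH] [|s] // lt_ms; first by rewrite /adc_poly big_ord0 coef1.
by rewrite coef_adc_polyS !IH ?mulr0 ?subr0 // ltnW.
Qed.

Lemma adc_poly_rev c1 c2 m : (forall t, (t < m)%N -> c2 t = c1 (m - t.+1)%N) ->
  adc_poly c1 m = adc_poly c2 m.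
Proof.
move=> c21; rewrite /adc_poly (reindex_inj rev_ord_inj) /=.
by apply: eq_bigr => t _; rewrite c21.
Qed.

Lemma gbinom_gt (v : k) m s : (m < s)%N -> gbinom v m s = 0.
Proof. by elim: m s => [|m IH] [|s] //= lt_ms; rewrite !IH ?mulr0 ?addr0 // ltnW. Qed.

Lemma gbinom_n0 (v : k) m : gbinom v m 0 = 1.
Proof. by case: m. Qed.

Lemma expr_mul_coef_adc_poly (Q b : k) m s : Q != 0 ->
  Q ^+ s * (adc_poly (fun t => Q ^+ 2 ^+ t * b) m)`_s
  = (- b) ^+ s * Q ^+ (s * m) * gbinom Q m s.
Proof.
move=> Q0; elim: m s => [|m IH] [|s].
- by rewrite coef_adc_poly0 /= !expr0 !mulr1.
- by rewrite /adc_poly big_ord0 coef1 /= !mulr0.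
- by rewrite coef_adc_poly0 gbinom_n0 mul0n !expr0 !mulr1.
have IH1 := IH s.+1; have IH0 := IH s.
rewrite coef_adc_polyS /=.
have [le_sm|lt_ms] := leqP s m; last first.
  have lt_mSs := leqW lt_ms.
  by rewrite !coef_adc_poly_gt ?gbinom_gt // !(mulr0, subr0, addr0).
have E0 : Q ^+ (s.+1 * m.+1) * Q ^+ (m - s) = Q ^+ (2 * m).+1 * Q ^+ (s * m).
  by rewrite -!exprD; congr (_ ^+ _); lia.
have E1 : Q ^+ (s.+1 * m.+1) * Q ^- s.+1 = Q ^+ (s.+1 * m).
  by rewrite mulnS exprD mulrC mulrA mulVf ?mul1r // expf_neq0.
rewrite mulrBr IH1.
have -> : Q ^+ s.+1 * (Q ^+ 2 ^+ m * b * (adc_poly (fun t => Q ^+ 2 ^+ t * b) m)`_s)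
    = Q ^+ (2 * m).+1 * b * (Q ^+ s * (adc_poly (fun t => Q ^+ 2 ^+ t * b) m)`_s).
  by rewrite -exprM !exprS; ring.
rewrite IH0; set X := Q ^+ (s.+1 * m.+1).
transitivity ((- b) ^+ s.+1
  * (X * Q ^- s.+1 * gbinom Q m s.+1 + X * Q ^+ (m - s) * gbinom Q m s)).
  by rewrite E0 E1 exprS; ring.
by ring.
Qed.

Lemma coef_adc_poly_qbinom (Q b : k) N s : Q != 0 ->
  (adc_poly (fun t => Q ^+ 2 ^+ t * b) N.+1)`_s = (- (b * Q ^+ N)) ^+ s * gbinom Q N.+1 s.
Proof.
move=> Q0; apply: (mulfI (expf_neq0 s Q0)); rewrite expr_mul_coef_adc_poly //.
by rewrite -mulNr exprMn -exprM mulnS exprD [(N * s)%N]mulnC; ring.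
Qed.

(* Read backwards, prod_t (1 - Q^-2t X) has the shape prod_t (1 - Q^2t b X), so the
   q-binomial theorem evaluates its coefficients both in Q^-1 and in Q. *)
Lemma gbinomV (Q : k) m s : Q != 0 -> gbinom Q^-1 m s = gbinom Q m s.
Proof.
move=> Q0; case: m => [|N]; first by case: s.
have Qi0 : Q^-1 != 0 by rewrite invr_eq0.
have /esym := coef_adc_poly_qbinom 1 N s Qi0.
rewrite (@adc_poly_rev _ (fun t => Q ^+ 2 ^+ t * (Q^-1 ^+ 2 ^+ N))); last first.
  move=> t le_tN /=; rewrite subSS mulr1.
  have -> : Q^-1 ^+ 2 ^+ N = Q^-1 ^+ 2 ^+ t * Q^-1 ^+ 2 ^+ (N - t) by rewrite -exprD subnKC.
  by rewrite !exprVn mulrA mulfV ?mul1r // !expf_neq0.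
rewrite coef_adc_poly_qbinom // mul1r.
have -> : Q^-1 ^+ 2 ^+ N * Q ^+ N = Q^-1 ^+ N.
  by rewrite -exprM mulnC exprM expr2 -mulrA exprVn mulVf ?mulr1 // expf_neq0.
by move/(mulfI (expf_neq0 s _)) => -> //; rewrite oppr_eq0 expf_neq0.
Qed.

End AdcPoly.

Section BraidedAdjoint.
Variables (k : fieldType) (B : algType k).

Lemma conj_mulr (g gi p q : B) : gi * g = 1 -> g * (p * q) * gi = (g * p * gi) * (g * q * gi).
Proof. by move=> gig; rewrite !mulrA -(mulrA _ gi g) gig mulr1. Qed.

Lemma conj_iter_adc (g gi h hi a w : B) (al be : k) :
  hi * h = 1 -> GRing.comm h g -> GRing.comm hi gi ->
  h * a * hi = al *: a -> h * w * hi = be *: w ->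
  forall m, h * iter m (adc g gi a) w * hi = (al ^+ m * be) *: iter m (adc g gi a) w.
Proof.
move=> hih hg higi ha hw; elim=> [|m IH] /=; first by rewrite mul1r.
set u := iter m _ w.
have hgu : h * (g * u * gi) * hi = g * (h * u * hi) * gi.
  by rewrite !mulrA hg -!mulrA higi.
rewrite /adc mulrBr mulrBl (conj_mulr a u hih) (conj_mulr (g * u * gi) a hih) hgu ha IH.
rewrite -!scalerAr -!scalerAl !scalerA scalerBr.
by congr (_ *: _ - _ *: _); rewrite exprS; ring.
Qed.

Lemma iter_adc_expand (g gi a w : B) (al be : k) :
  gi * g = 1 -> g * a * gi = al *: a -> g * w * gi = be *: w ->
  forall m, iter m (adc g gi a) w
    = \sum_(s < m.+1) (adc_poly (fun t => al ^+ t * be) m)`_s *: (a ^+ (m - s) * w * a ^+ s).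
Proof.
move=> gig ga gw; elim=> [|m IH].
  by rewrite big_ord1 coef_adc_poly0 scale1r expr0 mulr1 mul1r.
set P := adc_poly (fun t => al ^+ t * be) m in IH *.
set T := fun s : nat => a ^+ (m.+1 - s) * w * a ^+ s.
have left_sum : a * iter m (adc g gi a) w = \sum_(s < m.+2) P`_s *: T s.
  rewrite big_ord_recr /= coef_adc_poly_gt // scale0r addr0 IH mulr_sumr.
  apply: eq_bigr => s _; rewrite -scalerAr !mulrA -exprS /T subSn //.
  exact: ltn_ord s.
have right_sum : iter m (adc g gi a) w * a = \sum_(s < m.+2) (P * 'X)`_s *: T s.
  rewrite big_ord_recl /= coefMX /= scale0r add0r IH mulr_suml.
  apply: eq_bigr => s _; rewrite -scalerAl coefMX /T /bump /= add1n subSS.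
  by rewrite add0n exprSr !mulrA.
rewrite /= {1}/adc (conj_iter_adc gig (GRing.commr_refl g) (GRing.commr_refl gi) ga gw).
rewrite -scalerAl left_sum right_sum scaler_sumr -sumrB adc_polyS.
by apply: eq_bigr => s _; rewrite coefB coefZ scalerBl scalerA.
Qed.

Lemma iter_adc_qbinom (g gi a w : B) (Q be : k) N :
  gi * g = 1 -> Q != 0 -> g * a * gi = Q ^+ 2 *: a -> g * w * gi = be *: w ->
  iter N.+1 (adc g gi a) w
  = \sum_(s < N.+2)
      ((- (be * Q ^+ N)) ^+ s * gbinom Q N.+1 s) *: (a ^+ (N.+1 - s) * w * a ^+ s).
Proof.
move=> gig Q0 ga gw; rewrite (iter_adc_expand gig ga gw).
by apply: eq_bigr => s _; rewrite coef_adc_poly_qbinom.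
Qed.

End BraidedAdjoint.

Section Character.
Variables (k : fieldType) (G : zmodType) (c : G -> k).
Hypothesis c_char : is_character c.

Lemma character_neq0 g : c g != 0. Proof. by case: c_char. Qed.

Lemma characterD g h : c (g + h) = c g * c h. Proof. by case: c_char. Qed.

Lemma character0 : c 0 = 1.
Proof. by apply: (mulfI (character_neq0 0)); rewrite mulr1 -characterD addr0. Qed.

Lemma characterN g : c (- g) = (c g)^-1.
Proof.
apply: (mulfI (character_neq0 g)).
by rewrite -characterD subrr character0 divff ?character_neq0.
Qed.

Lemma characterMn g m : c (g *+ m) = c g ^+ m.
Proof. by elim: m => [|m IH]; rewrite ?mulr0n ?character0 // mulrS characterD IH exprS. Qed.

End Character.

Section SmashRep.
Variables (k : fieldType) (G : zmodType) (B : algType k) (n : nat).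
Variables (chi : 'I_n -> G -> k) (x y : 'I_n -> B) (rho : G -> B).
Hypothesis rep : smash_rep chi x y rho.
Hypothesis chi_char : forall i, is_character (chi i).

Lemma rhoD g h : rho (g + h) = rho g * rho h. Proof. by case: rep => _ []. Qed.

Lemma rhoNr g : rho g * rho (- g) = 1.
Proof. by case: rep => rho0 _; rewrite -rhoD subrr. Qed.

Lemma rhoNl g : rho (- g) * rho g = 1.
Proof. by case: rep => rho0 _; rewrite -rhoD addNr. Qed.

Lemma rho_comm g h : GRing.comm (rho g) (rho h).
Proof. by rewrite /GRing.comm -!rhoD addrC. Qed.

Lemma conj_x g i : rho g * x i * rho (- g) = (chi i g)^-1 *: x i.
Proof. by case: rep => _ [_ []]. Qed.

Lemma conj_y g i : rho g * y i * rho (- g) = chi i g *: y i.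
Proof. by case: rep => _ [_ []]. Qed.

Lemma rho_x g i : rho g * x i = (chi i g)^-1 *: (x i * rho g).
Proof. by rewrite scalerAl -conj_x -!mulrA rhoNl mulr1. Qed.

Lemma rho_y g i : rho g * y i = chi i g *: (y i * rho g).
Proof. by rewrite scalerAl -conj_y -!mulrA rhoNl mulr1. Qed.

Lemma mulr_rho_eq0 (v : B) g : (v * rho g == 0) = (v == 0).
Proof.
apply/eqP/eqP => [v0|->]; last by rewrite mul0r.
by rewrite -[v]mulr1 -(rhoNr g) mulrA v0 mul0r.
Qed.

Variables (L K : 'I_n -> G).
Hypothesis chi_L : forall i j, chi i (L j) = chi j (K i).

Local Notation F i := (x i * rho (- L i)).

Lemma conj_F g i : rho g * F i * rho (- g) = (chi i g)^-1 *: F i.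
Proof.
by rewrite !mulrA -(mulrA _ (rho (- L i))) (rho_comm (- L i)) mulrA conj_x -scalerAl.
Qed.

Lemma conj_iter_adc_x i j g m :
  rho g * iter m (adc (rho (L i)) (rho (- L i)) (x i)) (x j) * rho (- g)
  = ((chi i g)^-1 ^+ m * (chi j g)^-1) *: iter m (adc (rho (L i)) (rho (- L i)) (x i)) (x j).
Proof. by apply: conj_iter_adc; rewrite ?rhoNl ?conj_x //; apply: rho_comm. Qed.

(* Since chi_i(L_i) = chi_i(K_i) and chi_i(L_j) = chi_j(K_i), the scalar from
   conjugating ad_c(x_i)^m(x_j) by K_i cancels the one from moving its group
   factor past x_i; this is why the twist is by K_i. *)
Lemma iter_adc_F i j m :
  iter m (adc (rho (K i)) (rho (- K i)) (F i)) (F j)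
  = (\prod_(t < m) (chi i (L i) ^+ t * chi j (L i)))
    *: (iter m (adc (rho (L i)) (rho (- L i)) (x i)) (x j) * rho (- (L i *+ m + L j))).
Proof.
elim: m => [|m IH]; first by rewrite big_ord0 scale1r mulr0n add0r.
set W := iter m _ (x j) in IH *; set H := rho (- (L i *+ m + L j)) in IH *.
set H' := rho (- (L i *+ m.+1 + L j)); set th := chi i (L i) ^+ m * chi j (L i).
set ga := chi i (L i *+ m + L j).
have ga0 : ga != 0 by apply: character_neq0.
have th0 : th != 0 by rewrite mulf_neq0 ?expf_neq0 ?character_neq0.
have H'E : H' = rho (- L i) * H by rewrite /H' /H -rhoD mulrS -addrA opprD.
have W_L : rho (L i) * W * rho (- L i) = th^-1 *: W.
  by rewrite conj_iter_adc_x /th invfM exprVn.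
have W_NL : rho (- L i) * W * rho (- - L i) = th *: W.
  by rewrite conj_iter_adc_x !(characterN (chi_char _)) !invrK.
have W_K : rho (K i) * W * rho (- K i) = ga^-1 *: W.
  rewrite conj_iter_adc_x /ga (characterD (chi_char i)) (characterMn (chi_char i)).
  by rewrite !chi_L invfM exprVn.
have FWH : F i * (W * H) = th *: (x i * W * H').
  have -> : F i * (W * H) = x i * (rho (- L i) * W * rho (- - L i)) * (rho (- L i) * H).
    by rewrite opprK -!mulrA (mulrA (rho (L i))) rhoNr mul1r.
  by rewrite W_NL H'E -scalerAr -scalerAl.
have WHF : W * H * F i = ga *: (W * x i * H').
  rewrite mulrA -(mulrA W) /H rho_x (characterN (chi_char i)) invrK -/H.
  by rewrite -scalerAr -scalerAl H'E (rho_comm (- L i)) !mulrA.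
have KWHK : rho (K i) * (W * H) * rho (- K i) = ga^-1 *: (W * H).
  by rewrite scalerAl -W_K -!mulrA /H (rho_comm _ (- K i)).
have adcE (g gi a w : B) : adc g gi a w = a * w - g * w * gi * a by [].
rewrite /= -/W IH !adcE -scalerAr -scalerAr -scalerAl -scalerAl KWHK.
rewrite -scalerAl WHF FWH W_L big_ord_recr /= -/th.
by rewrite !scalerA mulfVK // mulrBl -!scalerAl scalerBr scalerA mulfK.
Qed.

Lemma iter_adc_x_eq0 i j m :
  (iter m (adc (rho (L i)) (rho (- L i)) (x i)) (x j) == 0)
  = (iter m (adc (rho (K i)) (rho (- K i)) (F i)) (F j) == 0).
Proof.
have c0 : \prod_(t < m) (chi i (L i) ^+ t * chi j (L i)) != 0.
  by apply/prodf_neq0 => t _; rewrite mulf_neq0 ?expf_neq0 ?character_neq0.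
by rewrite iter_adc_F scaler_eq0 (negPf c0) mulr_rho_eq0.
Qed.

Lemma commutator_E_F (l : 'I_n -> k) i j :
  y i * F j - F j * y i - ((i == j)%:R * (qq K chi i i)^-1 * l i) *: (rho (K i) - rho (- L i))
  = - (chi i (L j))^-1 *: ((x j * y i - chi i (L j) *: (y i * x j)
        - ((j == i)%:R * l j) *: (1 - rho (K j + L j))) * rho (- L j)).
Proof.
have c0 := character_neq0 (chi_char i) (L j).
rewrite -(mulrA (x j)) rho_y -scalerAr (characterN (chi_char i)) mulrA.
rewrite (mulrA (x j)) !mulrBl -!scalerAl mulrBl mul1r -rhoD addrK.
rewrite !scalerBr !scalerA mulNr mulVf // scaleN1r opprK.
case: eqVneq => [<-|_]; last first.
  by rewrite !(mul0r, mulr0, scale0r, subr0) scaleNr addrC.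
rewrite /qq -chi_L !mul1r !mulNr !scaleNr opprK.
by congr (_ - _); rewrite addrC.
Qed.

Lemma commutator_E_F_iff (l : 'I_n -> k) i j :
  x j * y i - chi i (L j) *: (y i * x j) - ((j == i)%:R * l j) *: (1 - rho (K j + L j)) = 0
  <-> y i * F j - F j * y i
      = ((i == j)%:R * (qq K chi i i)^-1 * l i) *: (rho (K i) - rho (- L i)).
Proof.
have c0 : - (chi i (L j))^-1 != 0 by rewrite oppr_eq0 invr_eq0 character_neq0.
split=> [R0 | /eqP]; first by apply/eqP; rewrite -subr_eq0 commutator_E_F R0 mul0r scaler0.
by rewrite -subr_eq0 commutator_E_F scaler_eq0 (negPf c0) mulr_rho_eq0 => /eqP.
Qed.

End SmashRep.

Lemma absz_1_subr (a : int) : a <= 0 -> `|1 - a|%N = `|a|%N.+1.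
Proof. by move=> a_le0; lia. Qed.

Lemma pp_nonpos (k : fieldType) (G : zmodType) (n : nat) (K : 'I_n -> G)
    (chi : 'I_n -> G -> k) (A : 'M[int]_n) (d : 'I_n -> nat) (qJ : 'I_n -> k) i j :
  A i j <= 0 -> pp K chi A d qJ i j = qq K chi i j * (qJ i ^+ d i) ^+ `|A i j|%N.
Proof.
move=> Aij_le0; have Aij : A i j = - `|A i j|%N%:Z by rewrite lez0_abs ?opprK.
rewrite /pp; case: ifP => [_ | not_conn].
  by rewrite [in LHS]Aij mulrN opprK -PoszM -exprM.
suff -> : A i j = 0 by rewrite expr0 mulr1.
by apply/eqP; apply: contraFT not_conn => Aij0; apply: connect1.
Qed.

Section QuantumSerre.
Variables (k : fieldType) (G : zmodType) (B : algType k) (n : nat).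
Variables (L K : 'I_n -> G) (chi : 'I_n -> G -> k) (A : 'M[int]_n).
Variables (d : 'I_n -> nat) (qJ : 'I_n -> k).
Variables (x y : 'I_n -> B) (rho : G -> B).
Hypothesis rep : smash_rep chi x y rho.
Hypothesis chi_char : forall i, is_character (chi i).
Hypothesis qq_ii : forall i, qq K chi i i = qJ i ^+ (2 * d i).
Hypothesis A_offdiag : forall i j, i != j -> A i j <= 0.

Local Notation F i := (x i * rho (- L i)).
Local Notation Q i := (qJ i ^+ d i).

Lemma chi_KK i : chi i (K i) = Q i ^+ 2.
Proof. by rewrite -[chi i (K i)]/(qq K chi i i) qq_ii mulnC exprM. Qed.

Lemma Q_neq0 i : Q i != 0.
Proof. by have := character_neq0 (chi_char i) (K i); rewrite chi_KK expf_eq0. Qed.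

Lemma iter_adc_y_qserre i j : i != j ->
  iter `|1 - A i j|%N (adc (rho (K i)) (rho (- K i)) (y i)) (y j)
  = \sum_(s < `|1 - A i j|%N.+1)
      ((- pp K chi A d qJ i j) ^+ s * gbinom (Q i) `|1 - A i j|%N s)
        *: (y i ^+ (`|1 - A i j|%N - s) * y j * y i ^+ s).
Proof.
move=> ij; have Aij_le0 := A_offdiag ij.
rewrite absz_1_subr // pp_nonpos //.
by apply: iter_adc_qbinom; rewrite ?(rhoNl rep) ?Q_neq0 ?(conj_y rep) ?chi_KK.
Qed.

Lemma iter_adc_F_qserre i j : i != j ->
  iter `|1 - A i j|%N (adc (rho (K i)) (rho (- K i)) (F i)) (F j)
  = \sum_(s < `|1 - A i j|%N.+1)
      ((- (pp K chi A d qJ i j)^-1) ^+ s * gbinom (Q i) `|1 - A i j|%N s)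
        *: (F i ^+ (`|1 - A i j|%N - s) * F j * F i ^+ s).
Proof.
move=> ij; have Aij_le0 := A_offdiag ij.
rewrite absz_1_subr // pp_nonpos // (@iter_adc_qbinom _ _ _ _ _ _ (Q i)^-1 (chi j (K i))^-1).
- by apply: eq_bigr => s _; rewrite gbinomV ?Q_neq0 // invfM exprVn.
- exact: rhoNl rep _.
- by rewrite invr_eq0 Q_neq0.
- by rewrite (conj_F rep) chi_KK exprVn.
- exact: (conj_F rep).
Qed.

End QuantumSerre.

Theorem lemma3p13 (k : closedFieldType) (G : zmodType) (n : nat)
    (L K : 'I_n -> G) (chi : 'I_n -> G -> k) (A : 'M[int]_n) (l : 'I_n -> k)
    (d : 'I_n -> nat) (qJ : 'I_n -> k) :
  [pchar k] =i pred0 ->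
  reduced_datum L K chi A ->
  (forall i, l i != 0) ->
  (forall i, d i \in [:: 1; 2; 3]%N) ->
  (forall i j, dynkin_conn A i j -> qJ i = qJ j) ->
  (forall i, qq K chi i i = qJ i ^+ (2 * d i)) ->
  (forall i j, dynkin_conn A i j -> (d i)%:Z * A i j = (d j)%:Z * A j i) ->
  forall (B : algType k) (x y : 'I_n -> B) (rho : G -> B),
  smash_rep chi x y rho ->
  let E := y in
  let F := fun i => x i * rho (- L i) in
  (orig_rels L K chi A l x y rho <-> new_rels L K chi A l d qJ E F rho) /\
  (forall g i, rho g * E i * rho (- g) = chi i g *: E i) /\
  (forall g i, rho g * F i * rho (- g) = (chi i g)^-1 *: F i) /\
  (forall (C : pzRingType) (Delta : B -> C) (t : B -> B -> C),
     (forall a b, Delta (a * b) = Delta a * Delta b) ->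
     (forall a b c e, t a b * t c e = t (a * c) (b * e)) ->
     (forall i, Delta (x i) = t (rho (L i)) (x i) + t (x i) 1) ->
     (forall i, Delta (y i) = t (rho (K i)) (y i) + t (y i) 1) ->
     (forall g, Delta (rho g) = t (rho g) (rho g)) ->
     forall i, Delta (E i) = t (rho (K i)) (E i) + t (E i) 1 /\
               Delta (F i) = t 1 (F i) + t (F i) (rho (- L i))).
Proof.
move=> _ [_ [[_ [A_offdiag _]] [chi_char [_ [chi_L _]]]]] _ _ _ qq_ii _ B x y rho rep E F.
rewrite {}/E {}/F; split; [|split; [exact: (conj_y rep)|split; [exact: (conj_F rep)|]]].
- have serre_y := iter_adc_y_qserre rep chi_char qq_ii A_offdiag.
  have serre_F := iter_adc_F_qserre L rep chi_char qq_ii A_offdiag.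
  have serre_x i j m := iter_adc_x_eq0 rep chi_char chi_L i j m.
  split=> [[rel_x [rel_y rel_xy]] | [rel_E [rel_F rel_EF]]]; (split; [|split]).
  + by move=> i j ij; rewrite -serre_y // rel_y.
  + by move=> i j ij; rewrite -serre_F //; apply/eqP; rewrite -serre_x rel_x.
  + by move=> i j; apply/(commutator_E_F_iff rep chi_char chi_L).
  + by move=> i j ij; apply/eqP; rewrite serre_x serre_F // rel_F.
  + by move=> i j ij; rewrite serre_y // rel_E.
  + by move=> i j; apply/(commutator_E_F_iff rep chi_char chi_L).
- move=> C Delta t DeltaM tM Delta_x Delta_y Delta_rho i; split; first exact: Delta_y.
  by rewrite DeltaM Delta_x Delta_rho mulrDl !tM (rhoNr rep) mul1r.
Qed.
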